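(* Let $\mathbb{K}$ be an algebraically closed field. Every triangular dual $3$-net in $PG(2,\mathbb{K})$ realizes a cyclic group which is isomorphic to a (finite) subgroup of the multiplicative group $\mathbb{K}^*$.
   Context: A dual $3$-net of order $n$ in $PG(2,\mathbb{K})$ is a triple $(\Lambda_1,\Lambda_2,\Lambda_3)$ of pairwise disjoint point sets, each of size $n$, such that every line meeting two distinct components meets each component in exactly one point. It realizes a group $(G,\cdot)$ if there are bijections $\alpha:G\to\Lambda_1$, $\beta:G\to\Lambda_2$, $\gamma:G\to\Lambda_3$ such that $a\cdot b=c$ if and only if $\alpha(a),\beta(b),\gamma(c)$ are collinear. A dual $3$-net of order $n\ge4$ is triangular if its three components lie respectively on the three sides of a triangle. *)

From HB Require Import structures.
From mathcomp Require Import all_boot all_order all_algebra all_fingroup.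
Set Implicit Arguments. Unset Strict Implicit. Unset Printing Implicit Defensive.
Import GRing.Theory.
Local Open Scope ring_scope.

(* Homogeneous coordinates: a point (resp. a line) of PG(2,K) is represented
   by a nonzero row vector of K^3, up to a nonzero scalar. *)
Definition hvec (K : fieldType) := 'rV[K]_3.

Definition same_pt (K : fieldType) (p q : hvec K) : Prop :=
  exists c : K, c != 0 /\ q = c *: p.

Definition on_line (K : fieldType) (l p : hvec K) : Prop :=
  \sum_(i < 3) l 0 i * p 0 i = 0.

Definition collinear (K : fieldType) (p q r : hvec K) : Prop :=
  exists l : hvec K, l != 0 /\ on_line l p /\ on_line l q /\ on_line l r.

Definition point_set (K : fieldType) (n : nat) (L : 'I_n -> hvec K) : Prop :=
  (forall a, L a != 0) /\ (forall a b, same_pt (L a) (L b) -> a = b).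

(* Components L1, L2, L3 indexed by 'I_3 (component k is L k). *)
Definition disjoint_sets (K : fieldType) (n : nat) (L : 'I_3 -> 'I_n -> hvec K)
  : Prop :=
  forall i j a b, i != j -> ~ same_pt (L i a) (L j b).

Definition dual_3net (K : fieldType) (n : nat) (L : 'I_3 -> 'I_n -> hvec K)
  : Prop :=
  (forall k, point_set (L k)) /\ disjoint_sets L /\
  forall (l : hvec K) (i j : 'I_3), l != 0 -> i != j ->
    (exists a, on_line l (L i a)) -> (exists b, on_line l (L j b)) ->
    forall k : 'I_3, exists! c : 'I_n, on_line l (L k c).

Definition triangular (K : fieldType) (n : nat) (L : 'I_3 -> 'I_n -> hvec K)
  : Prop :=
  (4 <= n)%N /\
  exists v : 'I_3 -> hvec K,
    (forall k, v k != 0) /\ ~ collinear (v 0) (v 1) (v 2) /\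
    forall k : 'I_3, exists l : hvec K, l != 0 /\
      (forall k', k' != k -> on_line l (v k')) /\
      (forall a, on_line l (L k a)).

Definition bij_on (gT : finGroupType) (G : {group gT}) (n : nat)
  (f : gT -> 'I_n) : Prop :=
  {in G &, injective f} /\ forall i : 'I_n, exists2 x, x \in G & f x = i.

Definition realizes (K : fieldType) (n : nat) (L : 'I_3 -> 'I_n -> hvec K)
  (gT : finGroupType) (G : {group gT}) : Prop :=
  exists alpha beta gamma : gT -> 'I_n,
    bij_on G alpha /\ bij_on G beta /\ bij_on G gamma /\
    forall a b c, a \in G -> b \in G -> c \in G ->
      ((a * b)%g = c <-> collinear (L 0 (alpha a)) (L 1 (beta b)) (L 2 (gamma c))).

Definition embeds_in_units (K : fieldType) (gT : finGroupType) (G : {group gT})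
  : Prop :=
  exists phi : gT -> K,
    (forall x, x \in G -> phi x != 0) /\
    (forall x y, x \in G -> y \in G -> phi (x * y)%g = phi x * phi y) /\
    {in G &, injective phi}.
Arguments embeds_in_units K [gT] G.

(* Use the three side lines of the triangle as coordinate lines.  A point of
   the k-th component has vanishing k-th coordinate, and its two other
   coordinates are nonzero because a side line carries no point of another
   component; keep the ratio of these two coordinates.  Three points, one on
   each side, are collinear iff the product of their ratios is -1 (Menelaus).
   So for the ratio sets A, B, C every equation a b c = -1 with a in A, b in B
   has a solution c in C, which forces a B = a' B for all a, a' in A.  The
   scalars h with h B = B form a finite subgroup of K^*, hence a cyclic group,
   acting regularly on B, and the net realizes it. *)

From mathcomp Require Import all_boot all_order all_algebra all_fingroup all_solvable.
From mathcomp Require Import ring.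
Set Implicit Arguments. Unset Strict Implicit. Unset Printing Implicit Defensive.
Import GRing.Theory.
Local Open Scope ring_scope.

Lemma det_mx33 (R : comNzRingType) (A : 'M[R]_3) :
  \det A = A 0 0 * (A 1 1 * A 2 2 - A 1 2 * A 2 1)
         - A 0 1 * (A 1 0 * A 2 2 - A 1 2 * A 2 0)
         + A 0 2 * (A 1 0 * A 2 1 - A 1 1 * A 2 0).
Proof.
pose a i j : R := A (inord i) (inord j).
have -> : A = \matrix_(i, j) a i j by apply/matrixP => i j; rewrite mxE /a !inord_val.
rewrite (expand_det_row _ 0) !big_ord_recr big_ord0 /cofactor /=.
rewrite !(expand_det_row _ 0) !big_ord_recr !big_ord0 /cofactor /= !det_mx11 !mxE /=.
by rewrite /a /=; ring.
Qed.

Lemma ord3_rotations (k m : 'I_3) : [\/ m = k, m = ordS k | m = ordS (ordS k)].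
Proof.
suff : [|| m == k, m == ordS k | m == ordS (ordS k)].
  by case/or3P => /eqP; [apply: Or31 | apply: Or32 | apply: Or33].
by case: k m => [[|[|[|//]]] ?] [[|[|[|//]]] ?].
Qed.

Lemma ordS3_neq (k : 'I_3) : (ordS k != k) && (ordS (ordS k) != k).
Proof. by case: k => [[|[|[|//]]] ?]. Qed.

Lemma ordS3_E : [/\ ordS (0 : 'I_3) = 1, ordS (1 : 'I_3) = 2 & ordS (2 : 'I_3) = 0].
Proof. by split; apply: val_inj. Qed.

Section ProjectiveCoordinates.
Variable K : fieldType.
Implicit Types (l p q r : hvec K) (f g : 'I_3 -> hvec K).

Definition hdot l p := \sum_(i < 3) l 0 i * p 0 i.

Lemma hdotC l p : hdot l p = hdot p l.
Proof. by apply: eq_bigr => i _; rewrite mulrC. Qed.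

Lemma mul_tr_rowsE u f j : (u *m (\matrix_k f k)^T) 0 j = hdot u (f j).
Proof. by rewrite !mxE; apply: eq_bigr => k _; rewrite !mxE. Qed.

Lemma det_rows_mul f g :
  \det (\matrix_i f i) * \det (\matrix_k g k) = \det (\matrix_(i, k) hdot (g k) (f i)).
Proof.
rewrite -[\det (\matrix_k g k)]det_tr -det_mulmx; congr (\det _).
by apply/matrixP => i k; rewrite !mxE; apply: eq_bigr => j _; rewrite !mxE mulrC.
Qed.

Lemma collinear_det p q r :
  collinear p q r <-> \det (\matrix_(i < 3) nth 0 [:: p; q; r] i) = 0.
Proof.
rewrite -det_tr; split.
  case=> l [l_neq0 [lp [lq lr]]]; apply/eqP/det0P; exists l => //.
  by apply/rowP => -[[|[|[|//]]] ?]; rewrite mul_tr_rowsE mxE.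
move/eqP/det0P => [l l_neq0 /rowP l_ker]; exists l.
by do !split => //; [move: (l_ker 0) | move: (l_ker 1) | move: (l_ker 2)];
  rewrite mul_tr_rowsE mxE.
Qed.

Lemma det_side_lines_neq0 (v lf : 'I_3 -> hvec K) :
  ~ collinear (v 0) (v 1) (v 2) -> (forall k, lf k != 0) ->
  (forall k k', k' != k -> hdot (lf k) (v k') = 0) -> \det (\matrix_k lf k) != 0.
Proof.
move=> v_nc lf_neq0 lf_v.
have lf_vk k : hdot (lf k) (v k) != 0.
  apply/eqP => lf_vk0; apply: v_nc; exists (lf k).
  have on_lf k' : on_line (lf k) (v k') by case: (eqVneq k' k) => [->|]; last exact: lf_v.
  by do !split.
have : \det (\matrix_i v i) * \det (\matrix_k lf k) != 0.
  rewrite det_rows_mul.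
  have -> : \matrix_(i, k) hdot (lf k) (v i) = diag_mx (\row_k hdot (lf k) (v k)).
    apply/matrixP => i k; rewrite !mxE.
    by case: eqVneq => [->|/lf_v ->]; rewrite ?mulr1n ?mulr0n.
  by rewrite det_diag; apply/prodf_neq0 => k _; rewrite mxE.
by rewrite mulf_eq0 negb_or => /andP[].
Qed.

Section SideLines.
Variable lf : 'I_3 -> hvec K.
Hypothesis lf_free : \det (\matrix_k lf k) != 0.

Lemma eq_scale_of_hdot p q s : (forall k, hdot (lf k) q = s * hdot (lf k) p) -> q = s *: p.
Proof.
move=> hdot_qp; have lf_unit : (\matrix_k lf k)^T \in unitmx by rewrite unitmxE det_tr unitfE.
rewrite -[q](mulmxK lf_unit) -[s *: p](mulmxK lf_unit); congr (_ *m _).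
by apply/rowP => k; rewrite -scalemxAl [RHS]mxE !mul_tr_rowsE -!(hdotC (lf k)).
Qed.

Definition side_coord k p := hdot (lf (ordS k)) p / hdot (lf (ordS (ordS k))) p.

Lemma same_pt_of_side_coord k p q :
  hdot (lf k) p = 0 -> hdot (lf k) q = 0 ->
  hdot (lf (ordS (ordS k))) p != 0 -> hdot (lf (ordS (ordS k))) q != 0 ->
  side_coord k p = side_coord k q -> same_pt p q.
Proof.
move=> p_k q_k p_k2 q_k2 eq_pq.
exists (hdot (lf (ordS (ordS k))) q / hdot (lf (ordS (ordS k))) p).
split; first by rewrite mulf_neq0 ?invr_eq0.
apply: eq_scale_of_hdot => m; case: (ord3_rotations k m) => ->.
- by rewrite p_k q_k mulr0.
- apply: (mulIf (invr_neq0 q_k2)); rewrite -[LHS]/(side_coord k q) -eq_pq /side_coord.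
  by field; rewrite q_k2 p_k2.
- by rewrite mulfVK.
Qed.

Lemma collinear_side_coord p q r :
  hdot (lf 0) p = 0 -> hdot (lf 1) q = 0 -> hdot (lf 2) r = 0 ->
  hdot (lf 2) p != 0 -> hdot (lf 0) q != 0 -> hdot (lf 1) r != 0 ->
  collinear p q r <-> side_coord 0 p * side_coord 1 q * side_coord 2 r = -1.
Proof.
move=> p0 q1 r2 p2 q0 r1; have [S0 S1 S2] := ordS3_E.
pose N := hdot (lf 1) p * hdot (lf 2) q * hdot (lf 0) r.
pose D := hdot (lf 2) p * hdot (lf 0) q * hdot (lf 1) r.
have D_neq0 : D != 0 by rewrite !mulf_neq0.
have det_pqr : \det (\matrix_(i < 3) nth 0 [:: p; q; r] i) * \det (\matrix_k lf k) = N + D.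
  by rewrite det_rows_mul det_mx33 !mxE /= p0 q1 r2 /N /D; ring.
have -> : side_coord 0 p * side_coord 1 q * side_coord 2 r = N / D.
  by rewrite /side_coord S0 S1 S2 S0 /N /D; field; rewrite p2 q0 r1.
rewrite collinear_det; split=> [det0 | /eqP].
  apply/eqP; rewrite -(inj_eq (mulIf D_neq0)) mulfVK // mulN1r -subr_eq0 opprK.
  by rewrite -det_pqr det0 mul0r.
rewrite -(inj_eq (mulIf D_neq0)) mulfVK // mulN1r -subr_eq0 opprK -det_pqr.
by rewrite mulf_eq0 (negbTE lf_free) orbF => /eqP.
Qed.

End SideLines.

End ProjectiveCoordinates.

Section TriangularNet.
Variables (K : fieldType) (n : nat) (L : 'I_3 -> 'I_n -> hvec K).
Hypothesis net : dual_3net L.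

Lemma dual_3net_third_point i j : exists k, collinear (L 0 i) (L 1 j) (L 2 k).
Proof.
have [l [l_neq0 [l_i [l_j _]]]] : collinear (L 0 i) (L 1 j) (L 0 i).
  by apply/collinear_det; rewrite det_mx33 !mxE /=; ring.
have [k [l_k _]] := net.2.2 l 0 1 l_neq0 isT (ex_intro _ i l_i) (ex_intro _ j l_j) 2.
by exists k, l.
Qed.

Lemma dual_3net_side_avoids l k x a : (1 < n)%N -> l != 0 ->
  (forall b, on_line l (L k b)) -> x != k -> hdot l (L x a) != 0.
Proof.
move=> n_gt1 l_neq0 l_k x_neq_k; apply/eqP => l_xa.
(* l would meet component k in the single point L k c, yet it contains L k 0 and L k 1 *)
have [c [_ c_uniq]] := net.2.2 l x k l_neq0 x_neq_k (ex_intro _ a l_xa)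
  (ex_intro _ (Ordinal n_gt1) (l_k _)) k.
have := etrans (esym (c_uniq (Ordinal (ltnW n_gt1)) (l_k _))) (c_uniq _ (l_k (Ordinal n_gt1))).
by move/(congr1 val).
Qed.

Lemma triangular_side_lines : triangular L ->
  exists lf : 'I_3 -> hvec K, [/\ \det (\matrix_k lf k) != 0,
    forall k a, hdot (lf k) (L k a) = 0 &
    forall k x a, x != k -> hdot (lf k) (L x a) != 0].
Proof.
case=> n_ge4 [v [_ [v_nc sides]]]; have [lf lfP] := fin_all_exists sides.
exists lf; split.
- apply: (det_side_lines_neq0 v_nc) => [k | k k']; first by case: (lfP k).
  by case: (lfP k) => _ [lf_v _]; apply: lf_v.
- by move=> k a; case: (lfP k) => _ [_]; apply.
- move=> k x a; case: (lfP k) => lf_neq0 [_ lf_k].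
  by apply: dual_3net_side_avoids => //; apply: leq_trans n_ge4.
Qed.

Section SideCoordinates.
Variable lf : 'I_3 -> hvec K.
Hypotheses (lf_free : \det (\matrix_k lf k) != 0)
  (L_on_side : forall k a, hdot (lf k) (L k a) = 0)
  (L_off_side : forall k x a, x != k -> hdot (lf k) (L x a) != 0).

Lemma side_coord_neq0 k a : side_coord lf k (L k a) != 0.
Proof.
by case/andP: (ordS3_neq k) => k1 k2; rewrite mulf_neq0 ?invr_eq0 ?L_off_side // eq_sym.
Qed.

Lemma side_coord_inj k : injective (fun a => side_coord lf k (L k a)).
Proof.
case/andP: (ordS3_neq k) => _ k2 a b eq_ab; apply: (net.1 k).2.
by apply: (same_pt_of_side_coord lf_free) eq_ab; rewrite ?L_on_side ?L_off_side // eq_sym.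
Qed.

Lemma collinear_net_side_coord i j k :
  collinear (L 0 i) (L 1 j) (L 2 k) <->
  side_coord lf 0 (L 0 i) * side_coord lf 1 (L 1 j) * side_coord lf 2 (L 2 k) = -1.
Proof. by apply: collinear_side_coord; rewrite ?L_on_side ?L_off_side. Qed.

End SideCoordinates.

End TriangularNet.

Section Dilations.
Variables (K : fieldType) (n : nat) (B : 'I_n -> K) (j0 : 'I_n).
Hypotheses (B_neq0 : forall j, B j != 0) (B_inj : injective B).
Implicit Types g : {perm 'I_n}.

Definition dilations : {set {perm 'I_n}} :=
  [set g : {perm 'I_n} | [forall j, B (g j) * B j0 == B (g j0) * B j]].

Definition dilation_ratio g := B (g j0) / B j0.

Lemma dilation_ratioE g (h : K) : (forall j, B (g j) = h * B j) -> dilation_ratio g = h.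
Proof. by move=> gB; rewrite /dilation_ratio gB mulfK. Qed.

Lemma dilationsP g : reflect (forall j, B (g j) = dilation_ratio g * B j) (g \in dilations).
Proof.
rewrite inE; apply: (iffP forallP) => gB j.
  by rewrite /dilation_ratio mulrAC -(eqP (gB j)) mulfK.
by rewrite (gB j) (gB j0) mulrAC.
Qed.

Lemma mem_dilations g (h : K) : (forall j, B (g j) = h * B j) -> g \in dilations.
Proof. by move=> gB; apply/dilationsP; rewrite (dilation_ratioE gB). Qed.

Lemma dilation1 j : B ((1%g : {perm 'I_n}) j) = 1 * B j.
Proof. by rewrite perm1 mul1r. Qed.

Lemma dilationM g h : g \in dilations -> h \in dilations ->
  forall j, B ((g * h)%g j) = dilation_ratio g * dilation_ratio h * B j.
Proof.
by move=> /dilationsP gB /dilationsP hB j; rewrite permM hB gB mulrA [_ * dilation_ratio g]mulrC.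
Qed.

Lemma group_set_dilations : group_set dilations.
Proof.
apply/group_setP; split; first exact: mem_dilations dilation1.
by move=> g h g_dil h_dil; apply: mem_dilations (dilationM g_dil h_dil).
Qed.

Canonical dilations_group := Group group_set_dilations.

Lemma dilation_ratio_neq0 g : dilation_ratio g != 0.
Proof. by rewrite mulf_neq0 ?invr_eq0. Qed.

Lemma dilation_ratio1 : dilation_ratio 1%g = 1.
Proof. exact: dilation_ratioE dilation1. Qed.

Lemma dilation_ratioM :
  {in dilations &, {morph dilation_ratio : g h / (g * h)%g >-> g * h}}.
Proof. by move=> g h g_dil h_dil; apply: dilation_ratioE (dilationM g_dil h_dil). Qed.

Lemma dilation_ratio_inj : {in dilations &, injective dilation_ratio}.
Proof.
move=> g h /dilationsP gB /dilationsP hB gh.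
by apply/permP => j; apply: B_inj; rewrite gB hB gh.
Qed.

Lemma cyclic_dilations : cyclic dilations.
Proof.
apply: (field_mul_group_cyclic dilation_ratioM) => g g_dil.
split=> [g1 | ->]; last exact: dilation_ratio1.
by apply: dilation_ratio_inj; rewrite ?group1 // g1 dilation_ratio1.
Qed.

Lemma dilations_embed_in_units : embeds_in_units K dilations_group.
Proof.
exists dilation_ratio; split=> [g _ | ]; first exact: dilation_ratio_neq0.
by split; [exact: dilation_ratioM | exact: dilation_ratio_inj].
Qed.

Lemma dilation_of_ratio (h : K) : h != 0 -> (forall j, exists j', B j' = h * B j) ->
  exists2 g, g \in dilations & dilation_ratio g = h.
Proof.
move=> h_neq0 hB; pose f j := odflt j [pick j' | B j' == h * B j].
have fB j : B (f j) = h * B j.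
  rewrite /f; case: pickP => [j' /eqP // | no_j'].
  by have [j' hBj] := hB j; move: (no_j' j'); rewrite hBj eqxx.
have f_inj : injective f by move=> i j fij; apply/B_inj/(mulfI h_neq0); rewrite -!fB fij.
have gB j : B (perm f_inj j) = h * B j by rewrite permE.
by exists (perm f_inj); [exact: mem_dilations gB | exact: dilation_ratioE gB].
Qed.

End Dilations.

Section Realization.
Variables (K : fieldType) (n : nat) (A B C : 'I_n -> K) (i0 : 'I_n).
Hypotheses (A_neq0 : forall i, A i != 0) (B_neq0 : forall j, B j != 0)
  (C_neq0 : forall k, C k != 0) (A_inj : injective A) (B_inj : injective B).
Hypothesis ABC_solvable : forall i j, exists k, A i * B j * C k = -1.
Implicit Types g : {perm 'I_n}.

Local Notation G := (dilations_group i0 B_neq0).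
Local Notation ratio := (dilation_ratio B i0).
Local Notation ratio_neq0 := (dilation_ratio_neq0 i0 B_neq0).
Local Notation ratio_inj := (dilation_ratio_inj B_neq0 B_inj).

Definition third i j := odflt i0 [pick k | A i * B j * C k == -1].

Lemma thirdP i j : A i * B j * C (third i j) = -1.
Proof.
rewrite /third; case: pickP => [k /eqP // | no_k].
by have [k ABCk] := ABC_solvable i j; move: (no_k k); rewrite ABCk eqxx.
Qed.

Lemma eq_mul_of_third i j i' j' : third i j = third i' j' -> A i * B j = A i' * B j'.
Proof.
by move=> eq_third; apply: (mulIf (C_neq0 (third i j))); rewrite thirdP eq_third thirdP.
Qed.

Lemma third_injr i : injective (third i).
Proof. by move=> j j' /eq_mul_of_third /(mulfI (A_neq0 i)) /B_inj. Qed.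

Lemma third_injl j : injective (third^~ j).
Proof. by move=> i i' /eq_mul_of_third /(mulIf (B_neq0 j)) /A_inj. Qed.

Lemma dilation_by_A_ratio i : exists2 g, g \in G & ratio g = A i / A i0.
Proof.
apply: (dilation_of_ratio i0 B_neq0 B_inj) => [|j]; first by rewrite mulf_neq0 ?invr_eq0.
have /codomP [j' eq_third] := injF_onto (@third_injr i0) (third i j); exists j'.
by apply: (mulfI (A_neq0 i0)); rewrite -(eq_mul_of_third eq_third); field.
Qed.

Definition beta g := g i0.

Lemma betaE g : g \in G -> B (beta g) = ratio g * B i0.
Proof. by move/dilationsP; apply. Qed.

Lemma dilation_to j : exists2 g, g \in G & g i0 = j.
Proof.
have /codomP [i /eq_mul_of_third ABi] := injF_onto (@third_injl i0) (third i0 j).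
have [g g_dil ratio_g] := dilation_by_A_ratio i; exists g => //.
apply: B_inj; rewrite -[g i0]/(beta g) betaE // ratio_g.
by apply: (mulfI (A_neq0 i0)); rewrite ABi; field.
Qed.

Definition gamma g := third i0 (beta g).
(* alpha g is the i with A i * B i0 = A i0 * B (beta g) *)
Definition alpha g := invF (@third_injl i0) (gamma g).

Lemma alphaE g : g \in G -> A (alpha g) = ratio g * A i0.
Proof.
move=> g_dil; apply: (mulIf (B_neq0 i0)).
rewrite (eq_mul_of_third (f_invF (@third_injl i0) (gamma g))) betaE //.
by rewrite mulrCA mulrA.
Qed.

Lemma ABC_alpha_beta_gamma a b c : a \in G -> b \in G -> c \in G ->
  A (alpha a) * B (beta b) * C (gamma c) = - (ratio a * ratio b / ratio c).
Proof.
move=> a_dil b_dil c_dil; rewrite alphaE // betaE //.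
have D_neq0 : A i0 * (ratio c * B i0) != 0.
  by rewrite mulf_neq0 ?A_neq0 // mulf_neq0 ?ratio_neq0 ?B_neq0.
have -> : C (gamma c) = - (A i0 * (ratio c * B i0))^-1.
  by apply: (mulfI D_neq0); rewrite mulrN mulfV // -betaE // thirdP.
by field; rewrite !ratio_neq0 A_neq0 B_neq0.
Qed.

Lemma bij_on_of_scale (X : 'I_n -> K) (f : {perm 'I_n} -> 'I_n) :
  X i0 != 0 -> {in G, forall g, X (f g) = ratio g * X i0} ->
  (forall i, exists2 g, g \in G & f g = i) -> bij_on G f.
Proof.
move=> X0 fX f_onto; split=> // g h g_dil h_dil fgh.
by apply: (ratio_inj g_dil h_dil); apply: (mulIf X0); rewrite -!fX // fgh.
Qed.

Lemma bij_on_alpha : bij_on G alpha.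
Proof.
apply: bij_on_of_scale (A_neq0 i0) alphaE _ => i.
have [g g_dil ratio_g] := dilation_by_A_ratio i; exists g => //.
by apply: A_inj; rewrite alphaE // ratio_g mulfVK.
Qed.

Lemma bij_on_beta : bij_on G beta.
Proof. exact: bij_on_of_scale (B_neq0 i0) betaE dilation_to. Qed.

Lemma bij_on_gamma : bij_on G gamma.
Proof.
split=> [g h g_dil h_dil /third_injr | k].
  by apply: (proj1 bij_on_beta).
have /codomP [j ->] := injF_onto (@third_injr i0) k.
by have [g g_dil <-] := dilation_to j; exists g.
Qed.

Lemma realizes_of_coords (L : 'I_3 -> 'I_n -> hvec K) :
  (forall i j k, collinear (L 0 i) (L 1 j) (L 2 k) <-> A i * B j * C k = -1) ->
  realizes L G.
Proof.
move=> collinear_ABC; exists alpha, beta, gamma.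
split; [exact: bij_on_alpha | split; [exact: bij_on_beta | split; [exact: bij_on_gamma |]]].
move=> a b c a_dil b_dil c_dil; rewrite collinear_ABC ABC_alpha_beta_gamma //.
split=> [<- | /eqP].
  by rewrite dilation_ratioM // divff // mulf_neq0 ?ratio_neq0.
rewrite eqr_opp => /eqP /divr1_eq; rewrite -dilation_ratioM // => eq_ratio.
exact: ratio_inj (groupM a_dil b_dil) c_dil eq_ratio.
Qed.

End Realization.

Theorem proposition4p3 (K : closedFieldType) (n : nat)
  (L : 'I_3 -> 'I_n -> hvec K) :
  dual_3net L -> triangular L ->
  exists (gT : finGroupType) (G : {group gT}),
    cyclic G /\ realizes L G /\ embeds_in_units K G.
Proof.
move=> net tri; have [lf [lf_free L_on_side L_off_side]] := triangular_side_lines net tri.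
pose coord k a := side_coord lf k (L k a).
have coord_neq0 k a : coord k a != 0 := side_coord_neq0 L_off_side k a.
have coord_inj k : injective (coord k) := side_coord_inj net lf_free L_on_side L_off_side (k := k).
have collinear_coord := collinear_net_side_coord lf_free L_on_side L_off_side.
have coord_solvable i j : exists k, coord 0 i * coord 1 j * coord 2 k = -1.
  by have [k /collinear_coord] := dual_3net_third_point net i j; exists k.
have i0 : 'I_n by case: tri => n_ge4 _; exists 0%N; apply: leq_trans n_ge4.
exists _, (dilations_group i0 (coord_neq0 1)); split.
  exact: cyclic_dilations (coord_inj 1).
split; last exact: dilations_embed_in_units (coord_inj 1).
exact: realizes_of_coords (coord_inj 0) (coord_inj 1) coord_solvable _ collinear_coord.
Qed.
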